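(* Let $q$ be a root of unity with $q^8\ne1$, $N=\mathrm{ord}(q^4)$, $\epsilon=q^{N^2}$, $\vec w\in\mathbb C^4$, and $\sigma\in\mathbb C^\times$ with $z_0:=\epsilon^2(\sigma^N+\sigma^{-N})\ne\pm2$. Then the image of $(\Pi_s,\Pi_t):E^0_{\sigma,\vec w}\to\mathbb C^2$ is exactly the curve $\{(x,y):xy=R(z_0,\vec w)\}$, where $$R(z_0,\vec w)=\frac{\kappa(W_1,W_2,z_0)\,\kappa(W_3,W_4,z_0)}{(z_0^2-4)^2},\qquad W_j=T_N(w_j).$$
   Context: $T_N$ is the Chebyshev polynomial with $T_N(t+t^{-1})=t^N+t^{-N}$. $\kappa(a,b,c)=a^2+b^2+c^2+abc-4$. For indices $i\in\mathbb Z/N$: $\lambda'_i=q^{4i+2}\sigma+q^{-4i-2}\sigma^{-1}$, $\hat\lambda_i=q^{4i}\sigma-q^{-4i}\sigma^{-1}$, $\hat\lambda'_i=q^{4i+2}\sigma-q^{-4i-2}\sigma^{-1}$; $r_i(\sigma,\vec w)=\dfrac{\kappa(w_1,w_2,\lambda'_i)\kappa(w_3,w_4,\lambda'_i)}{\hat\lambda_i\hat\lambda_{i+1}(\hat\lambda'_i)^2}$; $E^0_{\sigma,\vec w}=\{(s_1,\dots,s_N,t_1,\dots,t_N)\in\mathbb C^{2N}:s_it_i=r_i(\sigma,\vec w)\}$; $\Pi_s=\prod_{i=1}^Ns_i$, $\Pi_t=\prod_{i=1}^Nt_i$. *)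

From HB Require Import structures.
From mathcomp Require Import all_boot all_order all_algebra.
From mathcomp Require Import complex reals.
Set Implicit Arguments. Unset Strict Implicit. Unset Printing Implicit Defensive.
Import Order.TTheory GRing.Theory Num.Theory.
Local Open Scope ring_scope.

Section Defs.
Variable F : fieldType.

(* Chebyshev polynomial (as a function) T_N, the unique polynomial with
   T_N(t + t^-1) = t^N + t^-N: T_0 = 2, T_1 = x, T_{n+2} = x T_{n+1} - T_n. *)
Fixpoint chebT (n : nat) (x : F) : F :=
  match n with
  | 0 => 2
  | 1 => x
  | (m.+1 as k).+1 => x * chebT k x - chebT m x
  end.

Definition kappa (a b c : F) : F := a ^+ 2 + b ^+ 2 + c ^+ 2 + a * b * c - 4.

Definition lambda' (q sigma : F) (i : nat) : F :=
  q ^+ (4 * i + 2) * sigma + (q ^+ (4 * i + 2))^-1 * sigma^-1.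
Definition lambdahat (q sigma : F) (i : nat) : F :=
  q ^+ (4 * i) * sigma - (q ^+ (4 * i))^-1 * sigma^-1.
Definition lambdahat' (q sigma : F) (i : nat) : F :=
  q ^+ (4 * i + 2) * sigma - (q ^+ (4 * i + 2))^-1 * sigma^-1.

(* r_i(sigma, w) for i in Z/N, represented by 0 <= i < N; index i+1 taken mod N *)
Definition r_coef (N : nat) (q sigma : F) (w : 'I_4 -> F) (i : nat) : F :=
  kappa (w 0%R) (w 1%R) (lambda' q sigma i) * kappa (w 2%R) (w 3%R) (lambda' q sigma i)
  / (lambdahat q sigma i * lambdahat q sigma (i.+1 %% N) * (lambdahat' q sigma i) ^+ 2).

Definition E0 (N : nat) (q sigma : F) (w : 'I_4 -> F) (s t : 'I_N -> F) : Prop :=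
  forall i : 'I_N, s i * t i = r_coef N q sigma w i.

Definition Pi (N : nat) (s : 'I_N -> F) : F := \prod_(i < N) s i.

Definition R_fun (N : nat) (z0 : F) (w : 'I_4 -> F) : F :=
  kappa (chebT N (w 0%R)) (chebT N (w 1%R)) z0 * kappa (chebT N (w 2%R)) (chebT N (w 3%R)) z0
  / (z0 ^+ 2 - 4) ^+ 2.

Definition is_order (a : F) (N : nat) : Prop :=
  (0 < N)%N /\ a ^+ N = 1 /\ forall m, (0 < m)%N -> a ^+ m = 1 -> (N <= m)%N.

Definition rootof1 (q : F) : Prop := exists n, (0 < n)%N /\ q ^+ n = 1.
End Defs.

(* Since s_i t_i = r_i, the products satisfy Pi_s Pi_t = prod_i r_i, and conversely every
   point of the curve x y = prod_i r_i is reached by putting all the freedom into one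
   coordinate.  With Q = q^4, a primitive N-th root of
   unity, and Y = q^2 sigma we have lambda'_i = Q^i Y + (Q^i Y)^-1; writing w = u + u^-1,
   kappa(w_1, w_2, .) splits into two factors of the shape lambda - (m + m^-1), and the
   norm identity prod_i (x - Q^i y) = x^N - y^N turns the product of each factor over i
   into an expression in u^N + u^-N = T_N(w).
   Finally c = (q^2)^N satisfies c^2 = 1, and c = -1 when N is even by minimality of N,
   which turns the argument -(-1)^N ((c sigma^N) + (c sigma^N)^-1) into z_0. *)
From HB Require Import structures.
From mathcomp Require Import all_boot all_order all_algebra.
From mathcomp Require Import complex reals.
From mathcomp Require Import ring.
Set Implicit Arguments. Unset Strict Implicit. Unset Printing Implicit Defensive.
Import Order.TTheory GRing.Theory Num.Theory.
Local Open Scope ring_scope.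

Lemma image_prod_of_factorizations (F : fieldType) (N : nat) (r : 'I_N -> F) (x y : F) :
  (0 < N)%N ->
  (exists s t : 'I_N -> F,
      (forall i, s i * t i = r i) /\ \prod_(i < N) s i = x /\ \prod_(i < N) t i = y)
  <-> x * y = \prod_(i < N) r i.
Proof.
move=> N_gt0; split.
  move=> [s [t [st_r [<- <-]]]].
  by rewrite -big_split; apply: eq_bigr => i _; apply: st_r.
move=> xy_r.
have [x0 | x_neq0] := eqVneq x 0.
  have /prodf_eq0[j _ /eqP rj0] : \prod_(i < N) r i == 0 by rewrite -xy_r x0 mul0r.
  exists (fun i => if i == j then 0 else r i), (fun i => if i == j then y else 1).
  split; [|split].
  - by move=> i; case: eqP => [->|_]; rewrite ?mul0r ?mulr1.
  - by rewrite (bigD1 j) //= eqxx mul0r x0.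
  - by rewrite (bigD1 j) //= eqxx big1 ?mulr1 // => i /negPf ->.
have j : 'I_N := Ordinal N_gt0.
exists (fun i => if i == j then x else 1), (fun i => if i == j then r j / x else r i).
split; [|split].
- by move=> i; case: eqP => [->|_]; rewrite ?mul1r // mulrC mulfVK.
- by rewrite (bigD1 j) //= eqxx big1 ?mulr1 // => i /negPf ->.
- rewrite (bigD1 j) //= eqxx (eq_bigr r) => [|i /negPf -> //].
  by rewrite -[y](mulKf x_neq0) xy_r [in RHS](bigD1 j) //= mulrAC mulrC.
Qed.

Definition sub_inv_norm (F : fieldType) (N : nat) (X : F) : F :=
  (1 - X) * ((-1) ^+ N - X) / ((-1) ^+ N.+1 * X).

Section PrimitiveRootProducts.
Variables (F : fieldType) (N : nat) (Q : F).
Hypothesis prim_Q : N.-primitive_root Q.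

Lemma prim_root_neq0 : Q != 0.
Proof.
apply/eqP => Q0; move: (prim_expr_order prim_Q).
by rewrite Q0 expr0n gtn_eqF ?(prim_order_gt0 prim_Q) // => /eqP; rewrite eq_sym oner_eq0.
Qed.

Lemma prod_sub_prim_root (x y : F) : \prod_(i < N) (x - Q ^+ i * y) = x ^+ N - y ^+ N.
Proof.
have N_gt0 := prim_order_gt0 prim_Q.
have [-> | y_neq0] := eqVneq y 0.
  by rewrite expr0n gtn_eqF // subr0; under eq_bigr do rewrite mulr0 subr0;
    rewrite prodr_const card_ord.
have := congr1 (fun p => p.[x / y]) (factor_Xn_sub_1 prim_Q).
rewrite horner_prod big_mkord !hornerE => prod_xy.
transitivity (\prod_(i < N) (y * (x / y - Q ^+ i))).
  by apply: eq_bigr => i _; rewrite mulrBr mulrCA divff // mulr1 mulrC.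
rewrite big_split /= prodr_const card_ord.
have -> : \prod_(i < N) (x / y - Q ^+ i) = (x / y) ^+ N - 1.
  by rewrite -prod_xy; apply: eq_bigr => i _; rewrite !hornerE.
by rewrite mulrBr -exprMn mulrCA divff // !mulr1.
Qed.

Lemma prod_prim_root_sub (Y c : F) :
  \prod_(i < N) (Q ^+ i * Y - c) = (-1) ^+ N * (c ^+ N - Y ^+ N).
Proof.
under eq_bigr do rewrite -opprB.
by rewrite prodrN card_ord prod_sub_prim_root.
Qed.

Lemma prod_prim_root_quadratic (Y a b : F) :
  \prod_(i < N) ((Q ^+ i * Y - a) * (Q ^+ i * Y - b) / (Q ^+ i * Y))
  = (a ^+ N - Y ^+ N) * (b ^+ N - Y ^+ N) / ((-1) ^+ N.+1 * Y ^+ N).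
Proof.
rewrite !big_split /= prodfV !prod_prim_root_sub.
have -> : \prod_(i < N) (Q ^+ i * Y) = (-1) ^+ N.+1 * Y ^+ N.
  under eq_bigr do rewrite -[_ * Y]subr0.
  rewrite prod_prim_root_sub expr0n gtn_eqF ?(prim_order_gt0 prim_Q) //.
  by rewrite sub0r exprS mulN1r mulrN mulNr.
have sign_sq : (-1) ^+ N * (-1) ^+ N = 1 :> F.
  by rewrite -expr2 -exprM mulnC exprM sqrrN !expr1n.
by rewrite mulrACA sign_sq mul1r exprS mulN1r.
Qed.

Lemma prod_prim_root_sub_inv (X : F) : X != 0 ->
  \prod_(i < N) (Q ^+ i * X - (Q ^+ i * X)^-1) = sub_inv_norm N (X ^+ N).
Proof.
move=> X_neq0; have := prod_prim_root_quadratic X 1 (-1); rewrite expr1n /sub_inv_norm => <-.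
apply: eq_bigr => i _.
have Qi_neq0 : Q ^+ i != 0 by rewrite expf_neq0 ?prim_root_neq0.
by field; apply/andP.
Qed.

Lemma prod_prim_root_add_inv_sub (Y m : F) : Y != 0 -> m != 0 ->
  \prod_(i < N) (Q ^+ i * Y + (Q ^+ i * Y)^-1 - (m + m^-1))
  = (m ^+ N - Y ^+ N) * (m^-1 ^+ N - Y ^+ N) / ((-1) ^+ N.+1 * Y ^+ N).
Proof.
move=> Y_neq0 m_neq0; rewrite -prod_prim_root_quadratic.
apply: eq_bigr => i _.
have Qi_neq0 : Q ^+ i != 0 by rewrite expf_neq0 ?prim_root_neq0.
by field; rewrite Y_neq0 Qi_neq0 m_neq0.
Qed.

End PrimitiveRootProducts.

Lemma chebT_add_inv (F : fieldType) (u : F) (n : nat) : u != 0 ->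
  chebT n (u + u^-1) = u ^+ n + u^-1 ^+ n.
Proof.
move=> u_neq0.
suff /(_ n)[] : forall n, chebT n (u + u^-1) = u ^+ n + u^-1 ^+ n
    /\ chebT n.+1 (u + u^-1) = u ^+ n.+1 + u^-1 ^+ n.+1 by [].
elim=> [|k [IHk IHk1]]; first by rewrite /= !expr0 !expr1.
split=> //.
have -> : chebT k.+2 (u + u^-1)
    = (u + u^-1) * chebT k.+1 (u + u^-1) - chebT k (u + u^-1) by [].
by rewrite IHk1 IHk !exprS; field.
Qed.

Lemma kappa_add_inv (F : fieldType) (u v c : F) : u != 0 -> v != 0 ->
  kappa (u + u^-1) (v + v^-1) c
  = (c - (- (u * v) + (- (u * v))^-1)) * (c - (- (u / v) + (- (u / v))^-1)).
Proof.
move=> u_neq0 v_neq0; rewrite /kappa.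
by field; rewrite v_neq0 u_neq0 !oppr_eq0 mulf_neq0 ?u_neq0.
Qed.

Lemma add_inv_surj (F : closedFieldType) (a : F) : exists2 u : F, u != 0 & a = u + u^-1.
Proof.
have [u u_root] := @solve_monicpoly F 2 (fun i => if i == 0%N then -1 else a) isT.
rewrite big_ord_recr big_ord1 /= expr0 expr1 mulr1 in u_root.
have u_neq0 : u != 0.
  by apply: contra_eq_neq u_root => ->; rewrite expr0n mulr0 addr0 eq_sym oppr_eq0 oner_eq0.
exists u => //; apply: (mulIf u_neq0).
by rewrite mulrDl mulVf // -expr2 u_root addrAC addNr add0r.
Qed.

Lemma prod_kappa_prim_root (F : closedFieldType) (N : nat) (Q Y a b : F) :
  N.-primitive_root Q -> Y != 0 ->
  \prod_(i < N) kappa a b (Q ^+ i * Y + (Q ^+ i * Y)^-1)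
  = kappa (chebT N a) (chebT N b) (- (-1) ^+ N * (Y ^+ N + (Y ^+ N)^-1)).
Proof.
move=> prim_Q Y_neq0.
have [u u_neq0 ->] := add_inv_surj a; have [v v_neq0 ->] := add_inv_surj b.
under eq_bigr do rewrite kappa_add_inv //.
rewrite big_split /= !prod_prim_root_add_inv_sub ?oppr_eq0 ?mulf_neq0 ?invr_eq0 //.
rewrite !chebT_add_inv // !exprVn (exprNn (u * v)) (exprNn (u / v)) !exprMn !exprVn.
have [uN_neq0 vN_neq0 YN_neq0] : [/\ u ^+ N != 0, v ^+ N != 0 & Y ^+ N != 0].
  by rewrite !expf_neq0.
rewrite exprS -signr_odd /kappa; case: (odd N); rewrite /= ?expr0 ?expr1;
  by field; rewrite YN_neq0 vN_neq0 uN_neq0 ?oppr_eq0 ?oner_eq0.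
Qed.

Lemma is_order_prim_root (F : fieldType) (a : F) (N : nat) :
  is_order a N -> N.-primitive_root a.
Proof.
move=> [N_gt0 [aN_eq1 N_min]].
have [m prim_m m_dvd_N] := prim_order_exists N_gt0 aN_eq1.
suff -> : N = m by [].
apply/eqP; rewrite eqn_leq (dvdn_leq N_gt0 m_dvd_N) andbT.
exact: N_min (prim_order_gt0 prim_m) (prim_expr_order prim_m).
Qed.

Lemma is_order_expr4 (F : fieldType) (q : F) (N : nat) : is_order (q ^+ 4) N ->
  ((q ^+ 2) ^+ N) ^+ 2 = 1 /\ (~~ odd N -> (q ^+ 2) ^+ N = -1).
Proof.
move=> [N_gt0 [q4N_eq1 N_min]].
have c_sq : ((q ^+ 2) ^+ N) ^+ 2 = 1.
  by rewrite -exprM mulnC exprM -[(q ^+ 2) ^+ 2]exprM q4N_eq1.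
split=> // N_even; have /eqP := c_sq; rewrite sqrf_eq1 => /orP[/eqP c_eq1 | /eqP //].
have N_half : N = N./2 * 2 by rewrite -{1}(odd_double_half N) (negPf N_even) add0n -muln2.
have half_gt0 : (0 < N./2)%N by move: N_gt0; rewrite {1}N_half muln_gt0 andbT.
have q4_half : (q ^+ 4) ^+ N./2 = 1.
  by rewrite -c_eq1 -!exprM [in RHS]N_half mulnCA mulnC.
have := N_min _ half_gt0 q4_half.
by rewrite {1}N_half -[X in (_ <= X)%N]muln1 leq_pmul2l.
Qed.

Section SignTwist.
Variables (F : fieldType) (N : nat) (c : F).
Hypotheses (c_sq : c ^+ 2 = 1) (c_even : ~~ odd N -> c = -1).

Lemma twist_sign : - (-1) ^+ N * c = c ^+ N.
Proof.
rewrite -signr_odd -[in RHS](odd_double_half N) exprD -mul2n exprM c_sq expr1n mulr1.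
case: (odd N) c_even => [_ | /(_ isT) ->].
  by rewrite !expr1 opprK mul1r.
by rewrite !expr0 mulN1r opprK.
Qed.

Lemma twist_inv : c^-1 = c.
Proof.
have c_neq0 : c != 0.
  by apply/eqP => c0; move: c_sq; rewrite c0 expr0n => /eqP; rewrite eq_sym oner_eq0.
by rewrite -[LHS]mul1r -c_sq expr2 mulfK.
Qed.

Lemma twist_add_inv (Z : F) :
  - (-1) ^+ N * (c * Z + (c * Z)^-1) = c ^+ N * (Z + Z^-1).
Proof. by rewrite invfM twist_inv -mulrDr mulrA twist_sign. Qed.

Lemma twist_sub_inv_norm (Z : F) : Z != 0 ->
  sub_inv_norm N Z ^+ 2 * sub_inv_norm N (c * Z) ^+ 2
  = ((c ^+ N * (Z + Z^-1)) ^+ 2 - 4) ^+ 2.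
Proof.
move=> Z_neq0; rewrite -twist_sign /sub_inv_norm [(-1) ^+ N.+1]exprS -signr_odd.
case: (odd N) c_even => [_ | /(_ isT) ->]; rewrite /= ?expr0 ?expr1;
  last by field; rewrite Z_neq0 ?oppr_eq0 ?oner_eq0.
have [-> | ->] : c = 1 \/ c = -1.
  by move/eqP: c_sq; rewrite sqrf_eq1 => /orP[] /eqP; [left | right].
all: by field; rewrite Z_neq0 ?oppr_eq0 ?oner_eq0.
Qed.
End SignTwist.

Lemma prod_r_coef (F : closedFieldType) (q sigma : F) (N : nat) (w : 'I_4 -> F) :
  is_order (q ^+ 4) N -> sigma != 0 ->
  \prod_(i < N) r_coef N q sigma w i
  = R_fun N ((q ^+ (N * N)) ^+ 2 * (sigma ^+ N + (sigma ^+ N)^-1)) w.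
Proof.
move=> ord_q4 sigma_neq0.
have prim_q4 := is_order_prim_root ord_q4.
have [c_sq c_even] := is_order_expr4 ord_q4.
have q_neq0 : q != 0 by apply: contra_neq (prim_root_neq0 prim_q4) => ->; rewrite expr0n.
have Y_neq0 : q ^+ 2 * sigma != 0 by rewrite mulf_neq0 ?expf_neq0.
have eps_sq : (q ^+ (N * N)) ^+ 2 = ((q ^+ 2) ^+ N) ^+ N by rewrite -!exprM mulnC mulnA.
have YN : (q ^+ 2 * sigma) ^+ N = (q ^+ 2) ^+ N * sigma ^+ N by rewrite exprMn.
have prod_kappa a b : \prod_(i < N) kappa a b (lambda' q sigma i)
    = kappa (chebT N a) (chebT N b) ((q ^+ (N * N)) ^+ 2 * (sigma ^+ N + (sigma ^+ N)^-1)).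
  rewrite eps_sq -(twist_add_inv c_sq c_even) -YN -(prod_kappa_prim_root _ _ prim_q4 Y_neq0).
  by apply: eq_bigr => i _; rewrite /lambda' -exprM mulrA -exprD invfM.
have prod_lambdahat : \prod_(i < N) lambdahat q sigma i = sub_inv_norm N (sigma ^+ N).
  rewrite -(prod_prim_root_sub_inv prim_q4 sigma_neq0); apply: eq_bigr => i _.
  by rewrite /lambdahat -exprM invfM.
have prod_lambdahat_succ :
    \prod_(i < N) lambdahat q sigma (i.+1 %% N) = sub_inv_norm N (sigma ^+ N).
  have -> : sigma ^+ N = (q ^+ 4 * sigma) ^+ N.
    by rewrite exprMn (prim_expr_order prim_q4) mul1r.
  rewrite -(prod_prim_root_sub_inv prim_q4 (mulf_neq0 (prim_root_neq0 prim_q4) sigma_neq0)).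
  apply: eq_bigr => i _; rewrite /lambdahat exprM (expr_mod _ (prim_expr_order prim_q4)).
  by rewrite exprSr -mulrA; congr (_ - _); rewrite !invfM !mulrA.
have prod_lambdahat' :
    \prod_(i < N) lambdahat' q sigma i = sub_inv_norm N ((q ^+ 2) ^+ N * sigma ^+ N).
  rewrite -YN -(prod_prim_root_sub_inv prim_q4 Y_neq0); apply: eq_bigr => i _.
  by rewrite /lambdahat' -exprM mulrA -exprD invfM.
rewrite /r_coef big_split /= prodfV !big_split /= !prod_kappa prod_lambdahat prod_lambdahat_succ.
by rewrite prod_lambdahat' -!expr2 (twist_sub_inv_norm c_sq c_even) ?expf_neq0 // -eps_sq.
Qed.

Theorem mainTheorem18 (R : realType) (q : R[i]) (N : nat) (w : 'I_4 -> R[i]) (sigma : R[i]) :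
  rootof1 q -> q ^+ 8 != 1 ->
  is_order (q ^+ 4) N ->
  sigma != 0 ->
  let eps := q ^+ (N * N) in
  let z0 := eps ^+ 2 * (sigma ^+ N + (sigma ^+ N)^-1) in
  z0 != 2 -> z0 != -2 ->
  forall x y : R[i],
    (exists s t : 'I_N -> R[i], E0 q sigma w s t /\ Pi s = x /\ Pi t = y) <->
    x * y = R_fun N z0 w.
Proof.
move=> _ _ ord_q4 sigma_neq0 eps z0 _ _ x y.
rewrite /z0 /eps -(prod_r_coef w ord_q4 sigma_neq0).
exact: image_prod_of_factorizations (ord_q4.1).
Qed.
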